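(* There is no $1$-dimensional freezing cellular automaton $F$ that simulates every $1$-dimensional freezing cellular automaton with neighborhood $\mathrm{VN}_1=\{-1,0,1\}$, even when simulations with arbitrary finite context $C$ are allowed.
   Context: A $d$-dimensional cellular automaton (CA) is $F=(d,Q,N,f)$ with $Q$ finite, $N\subset\mathbb{Z}^d$ finite, $f:Q^N\to Q$, global map $F(c)_z=f(c|_{z+N})$. A CA is freezing if there is a partial order $\preceq$ on $Q$ with $F(c)_z\preceq c_z$ for all $c,z$. Simulation: $F$ simulates $G$ (same dimension $d$) with slowdown $T>0$, rectangular block $B\subseteq\mathbb{Z}^d$ of size-vector $b$ and context $C$ (finite, $\vec0\in C$) if there is $\phi:Q_G^C\to Q_F^B$ such that $\bar\phi(c)_{bz+r}=\phi(c|_{z+C})_r$ ($bz$ componentwise) defines an injective map $\bar\phi$ with $\bar\phi(G(c))=F^T(\bar\phi(c))$ for all $c$. *)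

From HB Require Import structures.
From mathcomp Require Import all_boot all_order all_algebra.
Set Implicit Arguments. Unset Strict Implicit. Unset Printing Implicit Defensive.
Import Order.TTheory GRing.Theory Num.Theory.
Local Open Scope ring_scope.

Definition nbhd (N : seq int) : Type := {z : int | z \in N}.

Record CA := mkCA {
  st : finType;
  nb : seq int;
  rule : (nbhd nb -> st) -> st
}.

Definition config (F : CA) : Type := int -> st F.

Definition restr (Q : Type) (N : seq int) (c : int -> Q) (z : int) : nbhd N -> Q :=
  fun n => c (z + val n).

Definition global (F : CA) (c : config F) : config F :=
  fun z => rule (@restr (st F) (nb F) c z).

Definition partial_order (Q : Type) (le : Q -> Q -> Prop) : Prop :=
  (forall x, le x x) /\ (forall x y, le x y -> le y x -> x = y) /\
  (forall x y z, le x y -> le y z -> le x z).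

Definition freezing (F : CA) : Prop :=
  exists le : st F -> st F -> Prop, partial_order le /\
    forall (c : config F) (z : int), le (global c z) (c z).

(* Since b > 0 the defining equation
   determines bar_phi uniquely, so we quantify over it existentially. *)
Definition simulates (F G : CA) : Prop :=
  exists (T b : nat) (C : seq int)
         (phi : (nbhd C -> st G) -> 'I_b -> st F)
         (barphi : config G -> config F),
    (0 < T)%N /\ (0 < b)%N /\ (0 : int) \in C /\
    (forall (c : config G) (z : int) (r : 'I_b),
        barphi c (b%:Z * z + (nat_of_ord r)%:Z) = phi (@restr (st G) C c z) r) /\
    injective barphi /\
    (forall c : config G, barphi (@global G c) = iter T (@global F) (barphi c)).

(* Let F be freezing over states Q, with neighbourhood within radius r. The VN_1 freezing CA made
   of m independent layers, each carrying a signal that moves one cell right per step, has L^m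
   initial configurations with fronts at offsets in [0, L). If F simulated it, after n = L + O(1)
   steps all fronts have crossed a fixed window, so the encoded configurations agree left of a cut
   p, and they agreed right of p at time 0. By locality, the encoded configuration at time T n is
   then determined by the history of the r cells just left of p. F being freezing, this history
   is a nonincreasing sequence in Q^r, determined by the first time it reaches each of the
   K = |Q|^r values, so there are at most (T n + 1)^K histories. Injectivity of the encoding gives
   L^m <= (T n + 1)^K, which fails for m = K + 1 and L large. *)

From mathcomp Require Import all_boot all_order all_algebra zify.
From Stdlib Require Import FunctionalExtensionality.
Set Implicit Arguments. Unset Strict Implicit. Unset Printing Implicit Defensive.
Import Order.TTheory GRing.Theory Num.Theory.
Local Open Scope ring_scope.

Section NonincreasingHistories.
Variables (P : eqType) (le : P -> P -> Prop).
Hypothesis le_order : partial_order le.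

Lemma nonincreasing_le (h : nat -> P) : (forall s, le (h s.+1) (h s)) ->
  forall s s', (s <= s')%N -> le (h s') (h s).
Proof.
case: le_order => le_refl [_ le_trans] h_mono s s' /subnK <-.
elim: (s' - s)%N => [|d IH] //=; rewrite addSn; exact: le_trans (h_mono _) IH.
Qed.

Definition first_hit (h : nat -> P) (N : nat) (v : P) : nat := index v (mkseq h N).

Lemma first_hit_le (h : nat -> P) N t : (t < N)%N -> (first_hit h N (h t) <= t)%N.
Proof.
by move=> ltN; have := @index_nth _ (h 0%N) t (mkseq h N); rewrite size_mkseq nth_mkseq //; apply.
Qed.

Lemma first_hitK (h : nat -> P) N v : (first_hit h N v < N)%N -> h (first_hit h N v) = v.
Proof.
move=> lt_hit; have v_in : v \in mkseq h N by rewrite -index_mem size_mkseq.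
by rewrite -{2}(nth_index v v_in) nth_mkseq.
Qed.

(* A nonincreasing sequence is constant between two times at which it takes the same value,
   so it is recovered from the first time it hits each value. *)
Lemma history_eq_first_hit (h1 h2 : nat -> P) N :
  (forall s, le (h1 s.+1) (h1 s)) -> (forall s, le (h2 s.+1) (h2 s)) ->
  (forall v, first_hit h1 N v = first_hit h2 N v) -> forall t, (t < N)%N -> h1 t = h2 t.
Proof.
move=> + + + t ltN.
wlog le_hits : h1 h2 / (first_hit h1 N (h1 t) <= first_hit h2 N (h2 t))%N.
  move=> IH h1_mono h2_mono hits.
  by case: (leqP (first_hit h1 N (h1 t)) (first_hit h2 N (h2 t))) => [|/ltnW] le_hits;
    [exact: IH|apply/esym/IH].
move=> h1_mono h2_mono hits.
case: le_order => _ [le_anti _].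
have le1 := first_hit_le h1 ltN; have le2 := first_hit_le h2 ltN.
set s1 := first_hit h1 N (h1 t) in le_hits le1 *.
set s2 := first_hit h2 N (h2 t) in le_hits le2 *.
have h1s1 : h1 s1 = h1 t by apply: first_hitK; exact: leq_ltn_trans le1 ltN.
have h1s2 : h1 s2 = h2 t by rewrite /s2 -hits first_hitK // hits; exact: leq_ltn_trans le2 ltN.
rewrite -h1s2; apply: le_anti; first exact: nonincreasing_le.
by rewrite -h1s1; apply: nonincreasing_le.
Qed.

End NonincreasingHistories.

Lemma card_le_histories (P : finType) (le : P -> P -> Prop) (I : finType)
    (h : I -> nat -> P) N :
  partial_order le -> (forall i s, le (h i s.+1) (h i s)) ->
  (forall i j, (forall s, (s < N)%N -> h i s = h j s) -> i = j) ->
  (#|I| <= N.+1 ^ #|P|)%N.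
Proof.
move=> le_order h_mono h_inj.
pose code i : {ffun P -> 'I_N.+1} := [ffun v => inord (first_hit (h i) N v)].
have hit_small i v : (first_hit (h i) N v < N.+1)%N.
  by rewrite ltnS -{2}(size_mkseq (h i) N) index_size.
have code_inj : injective code.
  move=> i j /ffunP eq_code; apply: h_inj; apply: (history_eq_first_hit le_order) => // v.
  by have := congr1 val (eq_code v); rewrite !ffunE /= !inordK.
by have := leq_card code code_inj; rewrite card_ffun card_ord.
Qed.

Lemma partial_order_ffun (I : finType) (Q : Type) (le : Q -> Q -> Prop) :
  partial_order le -> partial_order (fun a b : {ffun I -> Q} => forall i, le (a i) (b i)).
Proof.
case=> le_refl [le_anti le_trans]; split; [|split].
- by move=> a i.
- by move=> a b ab ba; apply/ffunP => i; apply: le_anti.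
- by move=> a b c ab bc i; apply: le_trans (ab i) (bc i).
Qed.

Definition fresh : 'I_3 := @Ordinal 3 0 isT.
Definition front : 'I_3 := @Ordinal 3 1 isT.
Definition spent : 'I_3 := @Ordinal 3 2 isT.

Definition signal_rule (l c : 'I_3) : 'I_3 :=
  if c == front then spent else if (l == front) && (c == fresh) then front else c.

Lemma signal_rule_ge (l c : 'I_3) : (c <= signal_rule l c)%N.
Proof.
by rewrite /signal_rule; case: (c =P front) => [->|_] //; case: ifP => // /andP [_ /eqP ->].
Qed.

Definition wave (s z : int) : 'I_3 :=
  if s < z then fresh else if s == z then front else spent.

Lemma signal_rule_wave s z : signal_rule (wave s (z - 1)) (wave s z) = wave (s + 1) z.
Proof.
by rewrite /wave /signal_rule; do 3 case: ltgtP => // ?; lia.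
Qed.

Definition signals (m : nat) : CA :=
  @mkCA {ffun 'I_m -> 'I_3} [:: -1; 0; 1]
    (fun g => [ffun j => signal_rule (g (exist _ (-1) isT) j) (g (exist _ 0 isT) j)]).

Lemma signals_freezing m : freezing (signals m).
Proof.
exists (fun a b : {ffun 'I_m -> 'I_3} => forall j, (nat_of_ord (b j) <= a j)%N); split.
  apply: (@partial_order_ffun _ _ (fun a b : 'I_3 => (nat_of_ord b <= a)%N)); split; [|split].
  - by [].
  - by move=> a b ab ba; apply/val_inj/eqP; rewrite eqn_leq ab ba.
  - by move=> a b c ab bc; apply: leq_trans bc ab.
by move=> c z j; rewrite /global /restr ffunE /= addr0; apply: signal_rule_ge.
Qed.

Definition waves m (x : 'I_m -> int) : config (signals m) :=
  fun z => [ffun j => wave (x j) z].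

Lemma global_waves m (x : 'I_m -> int) : global (waves x) = waves (fun j => x j + 1).
Proof.
apply: functional_extensionality => z; apply/ffunP => j.
by rewrite /global /restr /= !ffunE addr0 signal_rule_wave.
Qed.

Lemma iter_global_waves m (x : 'I_m -> int) t :
  iter t (@global _) (waves x) = waves (fun j => x j + t%:Z).
Proof.
elim: t => [|t IH] /=.
  by congr waves; apply: functional_extensionality => j; rewrite addr0.
by rewrite IH global_waves; congr waves; apply: functional_extensionality => j; lia.
Qed.

Lemma waves_inj m (x y : 'I_m -> int) : waves x = waves y -> x =1 y.
Proof.
move=> eq_xy j; have := congr1 (fun c : config (signals m) => c (x j) j) eq_xy.
rewrite /waves !ffunE /wave ltxx eqxx.
by case: ltP => // _; case: eqP.
Qed.

Lemma waves_fresh m (x : 'I_m -> int) z :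
  (forall j, x j < z) -> waves x z = [ffun => fresh].
Proof. by move=> lt_xz; apply/ffunP => j; rewrite !ffunE /wave lt_xz. Qed.

Lemma waves_spent m (x : 'I_m -> int) z :
  (forall j, z < x j) -> waves x z = [ffun => spent].
Proof.
move=> lt_zx; apply/ffunP => j; rewrite !ffunE /wave.
by have := lt_zx j; case: ltgtP.
Qed.

Definition span (s : seq int) : nat := \max_(v <- s) absz v.

Lemma span_ge (s : seq int) v : v \in s -> (absz v <= span s)%N.
Proof. by move=> v_in; apply: leq_bigmax_seq. Qed.

Lemma iter_global_eq_right (F : CA) (p : int) (x y : config F) t :
  (forall q, p <= q -> x q = y q) ->
  (forall s q, (s < t)%N -> p - (span (nb F))%:Z <= q < p ->
     iter s (@global F) x q = iter s (@global F) y q) ->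
  forall q, p <= q -> iter t (@global F) x q = iter t (@global F) y q.
Proof.
move=> eq_right; elim: t => [|t IH] eq_strip q le_pq /=; first exact: eq_right.
rewrite /global; congr rule; apply: functional_extensionality => -[v v_in].
rewrite /restr /=; have := span_ge v_in => le_v.
case: (ltrP (q + v) p) => [lt_p|le_p].
- by apply: eq_strip => //; apply/andP; split; lia.
- by apply: IH => // s w lt_st; apply: eq_strip; lia.
Qed.

Section SimulatingSignals.
Variables (F : CA) (le : st F -> st F -> Prop).
Hypotheses (le_order : partial_order le)
  (F_freezing : forall (c : config F) z, le (global c z) (c z)).
Variables (m T b : nat) (C : seq int)
  (phi : (nbhd C -> st (signals m)) -> 'I_b -> st F)
  (barphi : config (signals m) -> config F).
Hypotheses (b_gt0 : (0 < b)%N)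
  (barphiE : forall c z (i : 'I_b),
     barphi c (b%:Z * z + (nat_of_ord i)%:Z) = phi (@restr _ C c z) i)
  (barphi_inj : injective barphi)
  (barphi_global : forall c, barphi (global c) = iter T (@global F) (barphi c)).

Lemma barphi_local (c c' : config (signals m)) q :
  (forall v, v \in C -> c ((q %/ b%:Z)%Z + v) = c' ((q %/ b%:Z)%Z + v)) ->
  barphi c q = barphi c' q.
Proof.
move=> eq_ctx.
have b_neq0 : b%:Z != 0 by lia.
have lt_mod : (absz (q %% b%:Z)%Z < b)%N.
  by have := modz_ge0 q b_neq0; have := @ltz_pmod q b%:Z; lia.
have -> : q = b%:Z * (q %/ b%:Z)%Z + (nat_of_ord (Ordinal lt_mod))%:Z.
  by rewrite /= gez0_abs ?modz_ge0 // mulrC -divz_eq.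
rewrite !barphiE; congr phi; apply: functional_extensionality => -[v v_in].
exact: eq_ctx.
Qed.

Lemma barphi_iter c t : barphi (iter t (@global _) c) = iter (T * t) (@global F) (barphi c).
Proof. by elim: t => [|t IH]; rewrite ?muln0 //= barphi_global IH mulnS iterD. Qed.

Variable L : nat.
Let R := span C.
Let r := span (nb F).
(* Through the context C, a cell q >= p only sees cells >= 1, where every initial layer is
   fresh, and a cell q < p only sees cells <= 2 R, which every front has passed after n steps. *)
Let p : int := (b * R.+1)%N.
Let n := (L + (2 * R + 1))%N.

Definition start (x : {ffun 'I_m -> 'I_L}) : config (signals m) :=
  waves (fun j => - (x j)%:Z).

Definition history (x : {ffun 'I_m -> 'I_L}) (s : nat) : {ffun 'I_r -> st F} :=
  [ffun i : 'I_r => iter s (@global F) (barphi (start x)) (p - r%:Z + (nat_of_ord i)%:Z)].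

Lemma history_nonincreasing x s i : le (history x s.+1 i) (history x s i).
Proof. by rewrite !ffunE; apply: F_freezing. Qed.

Lemma start_eq_right x y q : p <= q -> barphi (start x) q = barphi (start y) q.
Proof.
move=> le_pq; apply: barphi_local => v /span_ge le_v.
have le_div : R.+1%:Z <= (q %/ b%:Z)%Z by rewrite lez_divRL; lia.
by rewrite /start !waves_fresh // => j; lia.
Qed.

Lemma final_eq_left x y q :
  q < p -> barphi (iter n (@global _) (start x)) q = barphi (iter n (@global _) (start y)) q.
Proof.
move=> lt_qp; rewrite !iter_global_waves; apply: barphi_local => v /span_ge le_v.
have lt_div : (q %/ b%:Z)%Z < R.+1%:Z by rewrite ltz_divLR; lia.
have far (w : 'I_L) : (q %/ b%:Z)%Z + v < - w%:Z + n%:Z.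
  by have := ltn_ord w; rewrite /n; lia.
by rewrite !waves_spent // => j; apply: far.
Qed.

Lemma history_inj x y :
  (forall s, (s < T * n)%N -> history x s = history y s) -> x = y.
Proof.
move=> eq_hist.
have eq_final : barphi (iter n (@global _) (start x)) = barphi (iter n (@global _) (start y)).
  apply: functional_extensionality => q; case: (ltrP q p) => [|le_pq].
    exact: final_eq_left.
  rewrite !barphi_iter; apply: iter_global_eq_right le_pq => [|s q' lt_s /andP [ge_q' lt_q']].
    exact: start_eq_right.
  have lt_i : (absz (q' - (p - r%:Z))%R < r)%N by lia.
  have := congr1 (fun f : {ffun 'I_r -> st F} => f (Ordinal lt_i)) (eq_hist s lt_s).
  rewrite !ffunE /=.
  by have -> : p - r%:Z + (absz (q' - (p - r%:Z))%R)%:Z = q' by lia.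
have := barphi_inj eq_final; rewrite /start !iter_global_waves => /waves_inj eq_waves.
by apply/ffunP => j; apply: val_inj; have := eq_waves j => /=; lia.
Qed.

Lemma card_offsets_le : (L ^ m <= (T * n).+1 ^ (#|st F| ^ r))%N.
Proof.
have := card_le_histories (partial_order_ffun 'I_r le_order) history_nonincreasing history_inj.
by rewrite !card_ffun !card_ord.
Qed.

End SimulatingSignals.

Lemma exists_linear_expn_lt (c d K : nat) : exists L, ((c * (L + d)).+1 ^ K < L ^ K.+1)%N.
Proof.
pose A := (c * d.+1).+1; exists (A ^ K).+1.
have le_lin : ((c * ((A ^ K).+1 + d)).+1 <= A * (A ^ K).+1)%N by rewrite /A; nia.
have le_pow e : ((c * ((A ^ K).+1 + d)).+1 ^ e <= (A * (A ^ K).+1) ^ e)%N.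
  by case: e => [|e]; rewrite ?expn0 ?leq_exp2r.
by rewrite (leq_ltn_trans (le_pow K)) // expnMn expnSr mulnC ltn_pmul2l ?expn_gt0.
Qed.

Theorem theorem9 :
  ~ exists F : CA, freezing F /\
      forall G : CA, nb G =i [:: -1; 0; 1] -> freezing G -> simulates F G.
Proof.
move=> [F [[le [le_order F_freezing]] simulates_all]].
pose K := (#|st F| ^ span (nb F))%N.
have [T [b [C [phi [barphi [_ [b_gt0 [_ [barphiE [barphi_inj barphi_global]]]]]]]]]] :=
  simulates_all (signals K.+1) (fun _ => erefl) (signals_freezing K.+1).
have [L lt_L] := exists_linear_expn_lt T (2 * span C + 1) K.
have := card_offsets_le le_order F_freezing b_gt0 barphiE barphi_inj barphi_global L.
by rewrite leqNgt lt_L.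
Qed.
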